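(* Let $A\in\mathbb{R}^{n\times n}$ be monotone and let $A=P_1-R_1+S_1=P_2-R_2+S_2=P_3-R_3+S_3=P_4-R_4+S_4$ be four double weak regular splittings of $A$. Suppose $1\notin\sigma(S_2P_1^{-1})$ and $1\notin\sigma(S_4P_3^{-1})$. Define $\widehat{A}_1=(I-S_2P_1^{-1})A$, $\widehat{P}_1=P_2$, $\widehat{R}_1=R_2-S_2P_1^{-1}R_1$, and $\widehat{A}_2=(I-S_4P_3^{-1})A$, $\widehat{P}_2=P_4$, $\widehat{R}_2=R_4-S_4P_3^{-1}R_3$, and suppose $\widehat{A}_i^{-1}\geq 0$ for $i=1,2$. If $\widehat{P}_1^{-1}\widehat{A}_1\geq\widehat{P}_2^{-1}\widehat{A}_2$ and $\widehat{P}_1^{-1}\widehat{R}_1\geq\widehat{P}_2^{-1}\widehat{R}_2$, then $\rho(W_{12})\leq\rho(W_{34})<1$, where $$W_{12}=\begin{pmatrix} P_2^{-1}R_2-P_2^{-1}S_2P_1^{-1}R_1 & P_2^{-1}S_2P_1^{-1}S_1\\ I & 0\end{pmatrix},\qquad W_{34}=\begin{pmatrix} P_4^{-1}R_4-P_4^{-1}S_4P_3^{-1}R_3 & P_4^{-1}S_4P_3^{-1}S_3\\ I & 0\end{pmatrix}.$$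
   Context: Inequalities are entrywise; $\rho$ is the spectral radius, $\sigma$ the spectrum. $A$ is monotone if $A$ is nonsingular and $A^{-1}\geq 0$. A double splitting $A=P-R+S$ with $P$ nonsingular is a double weak regular splitting if $P^{-1}\geq 0$, $P^{-1}R\geq0$, $P^{-1}S\leq0$. *)

From HB Require Import structures.
From mathcomp Require Import all_boot all_order all_algebra.
From mathcomp Require Import complex.
From mathcomp Require Import classical_sets reals.
Set Implicit Arguments. Unset Strict Implicit. Unset Printing Implicit Defensive.
Import Order.TTheory GRing.Theory Num.Theory.
Local Open Scope ring_scope.

Section Defs.
Variable R : realType.

Definition mx_le (m n : nat) (A B : 'M[R]_(m, n)) : Prop :=
  forall i j, A i j <= B i j.
Definition mx_ge0 (m n : nat) (A : 'M[R]_(m, n)) : Prop := mx_le 0 A.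
Definition mx_le0 (m n : nat) (A : 'M[R]_(m, n)) : Prop := mx_le A 0.

Definition monotone_mx (n : nat) (A : 'M[R]_n) : Prop :=
  A \in unitmx /\ mx_ge0 (invmx A).

Definition cmx (n : nat) (A : 'M[R]_n) : 'M[R[i]]_n :=
  map_mx (fun x => (x%:C)%C) A.

Definition spectrum (n : nat) (A : 'M[R]_n) : set R[i] :=
  [set z | eigenvalue (cmx A) z].

Definition spectral_radius (n : nat) (A : 'M[R]_n) : R :=
  sup [set Normc.normc z | z in spectrum A].

Definition dwr_splitting (n : nat) (A P Rm S : 'M[R]_n) : Prop :=
  [/\ A = P - Rm + S, P \in unitmx, mx_ge0 (invmx P),
      mx_ge0 (invmx P *m Rm) & mx_le0 (invmx P *m S)].

Definition W_mx (n : nat) (P1 R1 S1 P2 R2 S2 : 'M[R]_n) : 'M[R]_(n + n) :=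
  block_mx (invmx P2 *m R2 - invmx P2 *m S2 *m invmx P1 *m R1)
           (invmx P2 *m S2 *m invmx P1 *m S1)
           1%:M 0.
End Defs.

From HB Require Import structures.
From mathcomp Require Import all_boot all_order all_algebra.
From mathcomp Require Import complex.
From mathcomp Require Import boolp classical_sets reals ring lra.
Import Order.TTheory GRing.Theory Num.Theory.
Local Open Scope ring_scope.
Set Implicit Arguments. Unset Strict Implicit.

(* Both W's are block companion matrices [T U; I 0] with T, U >= 0.  If
   [lambda] is an eigenvalue with eigenvector (lambda v; v), then r = |lambda|
   and y = |v| satisfy r^2 y <= (r T + U) y.  For the splittings at hand
   T + U = P^-1 N comes from a weak regular splitting Ahat = P - N of a
   monotone matrix, and no nonzero y >= 0 has y <= (T + U) y; hence r < 1.
   For r < 1 the hypotheses give r T12 + U12 <= r T34 + U34, so the vector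
   (r y; y) is r-subinvariant for W34, and the Collatz-Wielandt bound
   r <= rho(W34) follows: if rho(M) < 1 the entries of M^k tend to 0 (the
   characteristic polynomial turns them into a linear recurrence whose roots
   all lie in the open unit disc), whereas a subinvariant vector u <= M u
   keeps M^k u >= u. *)

Local Notation normc := (@Normc.normc _).

Section EntrywiseOrder.
Variable R : realType.
Implicit Types (m n p : nat).

Lemma mx_le_refl m n (A : 'M[R]_(m, n)) : mx_le A A.
Proof. by move=> i j. Qed.

Lemma mx_le_trans m n (A B C : 'M[R]_(m, n)) : mx_le A B -> mx_le B C -> mx_le A C.
Proof. by move=> leAB leBC i j; exact: le_trans (leAB i j) (leBC i j). Qed.

Lemma mx_ge0E m n (A : 'M[R]_(m, n)) : mx_ge0 A <-> forall i j, 0 <= A i j.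
Proof. by split=> A0 i j; move: (A0 i j); rewrite mxE. Qed.

Lemma mx_le0E m n (A : 'M[R]_(m, n)) : mx_le0 A <-> forall i j, A i j <= 0.
Proof. by split=> A0 i j; move: (A0 i j); rewrite mxE. Qed.

Lemma mx_subr_ge0 m n (A B : 'M[R]_(m, n)) : mx_ge0 (B - A) <-> mx_le A B.
Proof. by split=> leAB i j; move: (leAB i j); rewrite !mxE subr_ge0. Qed.

Lemma mx_lerB2l m n (A B C : 'M[R]_(m, n)) : mx_le (C - A) (C - B) -> mx_le B A.
Proof. by move=> le i j; move: (le i j); rewrite !mxE lerD2l lerN2. Qed.

Lemma mx_ge0_1 n : mx_ge0 (1%:M : 'M[R]_n).
Proof. by apply/mx_ge0E => i j; rewrite mxE ler0n. Qed.

Lemma mx_ge0_mul m n p (A : 'M[R]_(m, n)) (B : 'M[R]_(n, p)) :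
  mx_ge0 A -> mx_ge0 B -> mx_ge0 (A *m B).
Proof.
move=> /mx_ge0E A0 /mx_ge0E B0; apply/mx_ge0E => i j; rewrite mxE.
by apply: sumr_ge0 => k _; rewrite mulr_ge0.
Qed.

Lemma mx_le0_ge0_mul m n p (A : 'M[R]_(m, n)) (B : 'M[R]_(n, p)) :
  mx_le0 A -> mx_ge0 B -> mx_le0 (A *m B).
Proof.
move=> /mx_le0E A0 /mx_ge0E B0; apply/mx_le0E => i j; rewrite mxE.
by rewrite -oppr_ge0 -sumrN; apply: sumr_ge0 => k _; rewrite -mulNr mulr_ge0 ?oppr_ge0.
Qed.

Lemma mx_le0_mul m n p (A : 'M[R]_(m, n)) (B : 'M[R]_(n, p)) :
  mx_le0 A -> mx_le0 B -> mx_ge0 (A *m B).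
Proof.
move=> /mx_le0E A0 /mx_le0E B0; apply/mx_ge0E => i j; rewrite mxE.
by apply: sumr_ge0 => k _; rewrite mulr_le0.
Qed.

Lemma mx_ge0X n (A : 'M[R]_n) k : mx_ge0 A -> mx_ge0 (A ^+ k).
Proof.
move=> A0; elim: k => [|k IH]; first by rewrite expr0; exact: mx_ge0_1.
by rewrite exprS -mulmxE; exact: mx_ge0_mul.
Qed.

Lemma mx_lerD m n (A B C D : 'M[R]_(m, n)) :
  mx_le A B -> mx_le C D -> mx_le (A + C) (B + D).
Proof. by move=> leAB leCD i j; rewrite !mxE lerD. Qed.

Lemma mx_ge0_add m n (A B : 'M[R]_(m, n)) : mx_ge0 A -> mx_ge0 B -> mx_ge0 (A + B).
Proof. by move=> A0 B0; rewrite /mx_ge0 -[0]addr0; exact: mx_lerD. Qed.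

Lemma mx_ler_subl m n (A B : 'M[R]_(m, n)) : mx_ge0 B -> mx_le (A - B) A.
Proof. by move=> /mx_ge0E B0 i j; rewrite !mxE gerDl oppr_le0. Qed.

Lemma mx_ler_wpM2l m n p (A : 'M[R]_(m, n)) (B C : 'M[R]_(n, p)) :
  mx_ge0 A -> mx_le B C -> mx_le (A *m B) (A *m C).
Proof.
move=> /mx_ge0E A0 leBC i j; rewrite !mxE; apply: ler_sum => k _.
by rewrite ler_wpM2l.
Qed.

Lemma mx_ler_wpM2r m n p (A B : 'M[R]_(m, n)) (C : 'M[R]_(n, p)) :
  mx_ge0 C -> mx_le A B -> mx_le (A *m C) (B *m C).
Proof.
move=> /mx_ge0E C0 leAB i j; rewrite !mxE; apply: ler_sum => k _.
by rewrite ler_wpM2r.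
Qed.

Lemma mx_ler_wpZ2l m n (a : R) (A B : 'M[R]_(m, n)) :
  0 <= a -> mx_le A B -> mx_le (a *: A) (a *: B).
Proof. by move=> a0 leAB i j; rewrite !mxE ler_wpM2l. Qed.

Lemma mx_ge0Z m n (a : R) (A : 'M[R]_(m, n)) : 0 <= a -> mx_ge0 A -> mx_ge0 (a *: A).
Proof. by move=> a0 A0; rewrite /mx_ge0 -(scaler0 _ a); exact: mx_ler_wpZ2l. Qed.

Lemma block_mx_ge0 m n (A : 'M[R]_m) (B : 'M[R]_(m, n)) C (D : 'M[R]_n) :
  mx_ge0 A -> mx_ge0 B -> mx_ge0 C -> mx_ge0 D -> mx_ge0 (block_mx A B C D).
Proof.
move=> /mx_ge0E A0 /mx_ge0E B0 /mx_ge0E C0 /mx_ge0E D0; apply/mx_ge0E => i j.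
by rewrite !mxE; case: splitP => k _; rewrite mxE; case: splitP => l _.
Qed.

Lemma col_mx_le m1 m2 n (A C : 'M[R]_(m1, n)) (B D : 'M[R]_(m2, n)) :
  mx_le A C -> mx_le B D -> mx_le (col_mx A B) (col_mx C D).
Proof.
by move=> leAC leBD i j; rewrite !mxE; case: splitP => k _; [exact: leAC | exact: leBD].
Qed.

Lemma mx_ge0_neq0_pos m n (A : 'M[R]_(m, n)) :
  mx_ge0 A -> A != 0 -> exists i j, 0 < A i j.
Proof.
move=> /mx_ge0E A0; apply: contraNP => noA; apply/eqP/matrixP => i j.
rewrite mxE; apply/eqP; rewrite eq_le A0 andbT leNgt.
by apply/negP => Aij; apply: noA; exists i, j.
Qed.

Lemma mx_ge0_bounded_multiples_eq0 m n (y X : 'M[R]_(m, n)) :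
  mx_ge0 y -> (forall k, mx_le (k%:R *: y) X) -> y = 0.
Proof.
move=> /mx_ge0E y0 kyX; apply/matrixP => i j; rewrite mxE.
apply/eqP; rewrite eq_le y0 andbT leNgt; apply/negP => yij_gt0.
have X0 : 0 <= X i j by have := kyX 0%N i j; rewrite scale0r mxE.
have := kyX (Num.Def.archi_bound (X i j / y i j)) i j; rewrite mxE.
have := archi_boundP (divr_ge0 X0 (ltW yij_gt0)); rewrite ltr_pdivrMr //.
by move=> lt le; have := lt_le_trans lt le; rewrite ltxx.
Qed.

End EntrywiseOrder.

Section SpectralRadius.
Variable R : realType.
Implicit Types (n : nat) (z : R[i]).

Lemma normc_ge0 z : 0 <= normc z.
Proof. by case: z => a b; rewrite sqrtr_ge0. Qed.

Lemma normc_real (x : R) : normc x%:C%C = `|x|.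
Proof. by rewrite /= expr0n /= addr0 sqrtr_sqr. Qed.

Lemma normc_sum_le (I : Type) (r : seq I) (F : I -> R[i]) :
  normc (\sum_(k <- r) F k) <= \sum_(k <- r) normc (F k).
Proof.
elim/big_ind2: _ => //; first by rewrite Normc.normc0.
by move=> a b c d ab cd; apply: le_trans (le_normcD _ _) _; rewrite lerD.
Qed.

Lemma cmxE n (A : 'M[R]_n) : cmx A = map_mx (real_complex R) A.
Proof. by []. Qed.

Lemma cmxX n (A : 'M[R]_n) k : cmx (A ^+ k) = cmx A ^+ k.
Proof.
elim: k => [|k IH]; first by apply/matrixP => i j; rewrite !mxE; case: (i == j).
by rewrite !exprS -!mulmxE /cmx map_mxM -IH.
Qed.

Lemma eigenvalue_cmxZ n (A : 'M[R]_n) (c : R) z :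
  eigenvalue (cmx A) z -> eigenvalue (cmx (c *: A)) (c%:C%C * z).
Proof.
move=> /eigenvalueP [v Av v0]; apply/eigenvalueP; exists v => //.
have -> : cmx (c *: A) = c%:C%C *: cmx A by apply/matrixP => i j; rewrite !mxE rmorphM.
by rewrite -scalemxAr Av scalerA.
Qed.

Lemma spectrum_roots n (A : 'M[R]_n) :
  exists rs : seq R[i], forall z, eigenvalue (cmx A) z = (z \in rs).
Proof.
have [rs chiE] := closed_field_poly_normal (char_poly (cmx A)).
exists rs => z; rewrite eigenvalue_root_char chiE (monicP (char_poly_monic _)).
by rewrite scale1r root_prod_XsubC.
Qed.

Lemma eigenvalue_le_spectral_radius n (A : 'M[R]_n) z :
  eigenvalue (cmx A) z -> normc z <= spectral_radius A.
Proof.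
move=> Az; apply: sup_upper_bound; last by exists z.
split; first by exists (normc z), z.
have [rs specE] := spectrum_roots A.
exists (\big[Num.max/0]_(w <- rs) normc w) => _ [w Aw <-].
by apply: le_bigmax_seq; rewrite // -specE.
Qed.

Lemma spectral_radius_le n (A : 'M[R]_n) c : 0 <= c ->
  (forall z, eigenvalue (cmx A) z -> normc z <= c) -> spectral_radius A <= c.
Proof.
move=> c0 Ac; rewrite /spectral_radius.
have [->|/set0P ne] := eqVneq [set normc z | z in spectrum A]%classic set0.
  by rewrite sup0.
by apply: ge_sup => // _ [z Az <-]; exact: Ac.
Qed.

Lemma spectral_radius_ge0 n (A : 'M[R]_n) : 0 <= spectral_radius A.
Proof.
rewrite /spectral_radius.
have [->|/set0P [_ [z Az _]]] := eqVneq [set normc z | z in spectrum A]%classic set0.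
  by rewrite sup0.
exact: le_trans (normc_ge0 z) (eigenvalue_le_spectral_radius Az).
Qed.

Lemma spectral_radius_lt n (A : 'M[R]_n) c : 0 < c ->
  (forall z, eigenvalue (cmx A) z -> normc z < c) -> spectral_radius A < c.
Proof.
move=> c0 Ac; have [rs specE] := spectrum_roots A.
apply: (@le_lt_trans _ _ (\big[Num.max/0]_(w <- rs) normc w)).
  apply: spectral_radius_le => [|z Az]; first exact: bigmax_ge_id.
  by apply: le_bigmax_seq; rewrite // -specE.
by rewrite big_seq; apply: bigmax_lt => // w; rewrite -specE; exact: Ac.
Qed.

Lemma spectral_radiusZ_le n (A : 'M[R]_n) c :
  0 < c -> spectral_radius (c *: A) <= c * spectral_radius A.
Proof.
move=> c_gt0; apply: spectral_radius_le => [|z cAz].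
  by rewrite mulr_ge0 ?spectral_radius_ge0 ?ltW.
have := eigenvalue_le_spectral_radius (eigenvalue_cmxZ c^-1 cAz).
rewrite scalerA mulVf ?gt_eqF // scale1r Normc.normcM normc_real.
by rewrite gtr0_norm ?invr_gt0 // ler_pdivrMl.
Qed.

End SpectralRadius.

Section LinearRecurrences.
Variable R : realType.

Lemma bernoulli_ler (h : R) k : 0 <= h -> 1 + k%:R * h <= (1 + h) ^+ k.
Proof.
move=> h0; elim: k => [|k IH]; first by rewrite mul0r addr0 expr0.
rewrite exprS -natr1; have kh0 : 0 <= k%:R * h by rewrite mulr_ge0.
by apply: le_trans (ler_wpM2l _ IH); nra.
Qed.

Lemma exists_expr_lt (q c : R) : 0 <= q -> q < 1 -> 0 < c -> exists k, q ^+ k < c.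
Proof.
move=> q0 q1 c0; have [->|q_neq0] := eqVneq q 0; first by exists 1%N; rewrite expr1.
have q_gt0 : 0 < q by rewrite lt_def q_neq0.
pose h := q^-1 - 1; have h_gt0 : 0 < h by rewrite subr_gt0 invf_gt1.
pose k := Num.Def.archi_bound (c^-1 / h); exists k.
have ck : c^-1 < k%:R * h.
  by rewrite -ltr_pdivrMr // archi_boundP // divr_ge0 // ltW // invr_gt0.
have : c^-1 < (q ^+ k)^-1.
  rewrite -exprVn (_ : q^-1 = 1 + h); last by rewrite /h addrC subrK.
  by apply: lt_le_trans (bernoulli_ler k (ltW h_gt0)); rewrite ltr_wpDl.
by rewrite ltf_pV2 // posrE exprn_gt0.
Qed.

Definition shift_sub (l : R[i]) (a : nat -> R[i]) : nat -> R[i] :=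
  fun k => a k.+1 - l * a k.

Definition vanishing (a : nat -> R[i]) : Prop :=
  forall e, 0 < e -> exists K, forall k, (K <= k)%N -> normc (a k) < e.

Lemma foldr_shift_sub_comm l rs a :
  foldr shift_sub (shift_sub l a) rs =1 shift_sub l (foldr shift_sub a rs).
Proof. by elim: rs => [|l' rs IH] k //=; rewrite /shift_sub !IH /shift_sub; ring. Qed.

Lemma vanishing_shift_sub l a :
  normc l < 1 -> vanishing (shift_sub l a) -> vanishing a.
Proof.
move=> l_lt1 van_la e e_gt0; set q := normc l.
have q_ge0 : 0 <= q := normc_ge0 l.
have [K la_small] :
    exists K, forall k, (K <= k)%N -> normc (shift_sub l a k) < e * (1 - q) / 2.
  by apply: van_la; rewrite divr_gt0 // mulr_gt0 // subr_gt0.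
set B := normc (a K); have B_ge0 : 0 <= B := normc_ge0 _.
have a_le j : normc (a (K + j)%N) <= q ^+ j * B + e / 2.
  elim: j => [|j IH]; first by rewrite addn0 expr0 mul1r lerDl divr_ge0 // ltW.
  have -> : a (K + j.+1)%N = l * a (K + j)%N + shift_sub l a (K + j)%N.
    by rewrite /shift_sub addnS addrC subrK.
  apply: le_trans (le_normcD _ _) _; rewrite Normc.normcM.
  have := la_small _ (leq_addr j K); rewrite -/q exprS => small.
  have := ler_wpM2l q_ge0 IH; nra.
have [J qJ] : exists J, q ^+ J < e / 2 / (B + 1).
  by apply: exists_expr_lt => //; rewrite !divr_gt0 // ltr_wpDl.
exists (K + J)%N => k le_Kk; rewrite -(subnKC le_Kk) -addnA.
apply: le_lt_trans (a_le _) _; rewrite exprD.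
have qJ_ge0 : 0 <= q ^+ J := exprn_ge0 J q_ge0.
have qk_le1 : q ^+ (k - (K + J)) <= 1 := exprn_ile1 _ q_ge0 (ltW l_lt1).
move: qJ; rewrite ltr_pdivlMr ?ltr_wpDl // => qJ.
have := ler_wpM2r B_ge0 (ler_wpM2l qJ_ge0 qk_le1); nra.
Qed.

Lemma vanishing_foldr_shift_sub rs a : (forall l, l \in rs -> normc l < 1) ->
  foldr shift_sub a rs =1 (fun=> 0) -> vanishing a.
Proof.
elim: rs a => [|l rs IH] a rs_lt1 a0.
  by move=> e e0; exists 0%N => k _; rewrite [a k]a0 Normc.normc0.
apply: (vanishing_shift_sub (rs_lt1 l (mem_head _ _))); apply: IH.
  by move=> l' l'rs; apply: rs_lt1; rewrite in_cons l'rs orbT.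
by move=> k; rewrite foldr_shift_sub_comm; exact: a0.
Qed.

Lemma foldr_shift_sub_mxpowers n (M : 'M[R[i]]_n) (x : 'rV_n) (u : 'cV_n) rs :
  foldr shift_sub (fun k => (x *m M ^+ k *m u) 0 0) rs
  =1 (fun k => (x *m M ^+ k *m \prod_(l <- rs) (M - l%:M) *m u) 0 0).
Proof.
elim: rs => [|l rs IH] k /=; first by rewrite big_nil mulmx1.
rewrite /shift_sub !IH big_cons -mulmxE mulmxBl mul_scalar_mx !mulmxBr !mulmxBl.
rewrite -scalemxAr -!scalemxAl !mxE exprSr -mulmxE !mulmxA.
by congr (_ - _); rewrite -!mulmxA.
Qed.

(* By Cayley-Hamilton, [x M^k u] satisfies a linear recurrence whose
   characteristic roots are the eigenvalues of [M]. *)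
Lemma mxpowers_vanishing n (M : 'M[R[i]]_n.+1) (x : 'rV_n.+1) (u : 'cV_n.+1) :
  (forall l, eigenvalue M l -> normc l < 1) ->
  vanishing (fun k => (x *m M ^+ k *m u) 0 0).
Proof.
move=> M_lt1; have [rs chiE] := closed_field_poly_normal (char_poly M).
rewrite (monicP (char_poly_monic _)) scale1r in chiE.
apply: (vanishing_foldr_shift_sub (rs := rs)) => [l l_rs|k].
  by apply: M_lt1; rewrite eigenvalue_root_char chiE root_prod_XsubC.
rewrite foldr_shift_sub_mxpowers.
suff -> : \prod_(l <- rs) (M - l%:M) = 0 by rewrite mulmx0 mul0mx mxE.
rewrite -(Cayley_Hamilton M) chiE rmorph_prod.
by apply: eq_bigr => l _; rewrite rmorphB /= horner_mx_X horner_mx_C.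
Qed.

End LinearRecurrences.

Section CollatzWielandt.
Variable R : realType.

Lemma mx_le_mxpowers n (M : 'M[R]_n) (u : 'cV[R]_n) k :
  mx_ge0 M -> mx_le u (M *m u) -> mx_le u (M ^+ k *m u).
Proof.
move=> M0 uMu; elim: k => [|k IH]; first by rewrite expr0 mul1mx; exact: mx_le_refl.
apply: (mx_le_trans IH); rewrite exprSr -mulmxE -mulmxA.
exact: mx_ler_wpM2l (mx_ge0X k M0) uMu.
Qed.

Lemma spectral_radius_ge1 n (M : 'M[R]_n) (u : 'cV[R]_n) :
  mx_ge0 M -> mx_ge0 u -> u != 0 -> mx_le u (M *m u) -> 1 <= spectral_radius M.
Proof.
case: n => [|n] in M u *; first by rewrite [u]flatmx0 eqxx.
move=> M0 u0 /(mx_ge0_neq0_pos u0) [i [j ui_gt0]] uMu; rewrite [j]ord1 in ui_gt0.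
rewrite leNgt; apply/negP => rho_lt1.
have M_lt1 l : eigenvalue (cmx M) l -> normc l < 1.
  by move=> Ml; apply: le_lt_trans (eigenvalue_le_spectral_radius Ml) rho_lt1.
pose cu := map_mx (real_complex R) u.
have [K small] := mxpowers_vanishing (delta_mx 0 i) cu M_lt1 ui_gt0.
have := small K (leqnn K); rewrite -cmxX -rowE.
have -> : (row i (cmx (M ^+ K)) *m cu) 0 0 = ((M ^+ K *m u) i 0)%:C%C.
  by rewrite !mxE rmorph_sum; apply: eq_bigr => k _; rewrite !mxE rmorphM.
have := mx_le_mxpowers K M0 uMu i 0; rewrite mxE => uMKu.
by rewrite normc_real ger0_norm ?ltNge ?uMKu // (le_trans (ltW ui_gt0)).
Qed.

Lemma collatz_wielandt n (M : 'M[R]_n) (u : 'cV[R]_n) r :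
  mx_ge0 M -> mx_ge0 u -> u != 0 -> mx_le (r *: u) (M *m u) -> r <= spectral_radius M.
Proof.
move=> M0 u0 u_neq0 ruMu; have [r_le0|r_gt0] := lerP r 0.
  exact: le_trans r_le0 (spectral_radius_ge0 M).
have r'_gt0 : 0 < r^-1 by rewrite invr_gt0.
have r'M0 : mx_ge0 (r^-1 *: M) by apply: mx_ge0Z (ltW r'_gt0) M0.
have uM'u : mx_le u (r^-1 *: M *m u).
  rewrite -scalemxAl -[X in mx_le X](scale1r u) -(mulVf (lt0r_neq0 r_gt0)) -scalerA.
  exact: mx_ler_wpZ2l (ltW r'_gt0) ruMu.
have := spectral_radius_ge1 r'M0 u0 u_neq0 uM'u.
move/le_trans/(_ (spectral_radiusZ_le M r'_gt0)).
by rewrite mulrC ler_pdivlMr // mul1r.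
Qed.

End CollatzWielandt.

Lemma eigenvalue_col (F : fieldType) n (A : 'M[F]_n) a :
  eigenvalue A a -> exists2 v : 'cV_n, v != 0 & A *m v = a *: v.
Proof.
move/eigenvalueP => [v Av v_neq0].
have /det0P [w w_neq0 wA] : \det (a%:M - A)^T == 0.
  rewrite det_tr; apply/det0P; exists v => //.
  by rewrite mulmxBr Av mul_mx_scalar subrr.
exists w^T; first by rewrite trmx_eq0.
move/(congr1 trmx)/eqP: wA; rewrite trmx_mul trmxK trmx0 mulmxBl mul_scalar_mx.
by rewrite subr_eq0 => /eqP.
Qed.

Section WeakRegularSplitting.
Variable R : realType.

Definition weak_regular_splitting n (A P N : 'M[R]_n) : Prop :=
  [/\ A = P - N, P \in unitmx, mx_ge0 (invmx P) & mx_ge0 (invmx P *m N)].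

Lemma weak_regular_splitting_mulVmx n (A P N : 'M[R]_n) :
  weak_regular_splitting A P N -> invmx P *m A = 1%:M - invmx P *m N.
Proof. by case=> -> Pu _ _; rewrite mulmxBr mulVmx. Qed.

(* [|N y|] stands in for [N y], whose sign is unknown; with [B = P^-1 N] and
   [X = A^-1 |N y|] one gets [k y <= X - B^k X <= X] for every [k]. *)
Lemma weak_regular_subinvariant_eq0 n (A P N : 'M[R]_n) (y : 'cV[R]_n) :
  monotone_mx A -> weak_regular_splitting A P N ->
  mx_ge0 y -> mx_le y (invmx P *m N *m y) -> y = 0.
Proof.
move=> [Au Ai0] spl y0 yBy; have [_ _ Pi0 B0] := spl.
set B := invmx P *m N in B0 yBy.
pose w := map_mx Num.norm (N *m y); pose X := invmx A *m w.
have X0 : mx_ge0 X by apply/mx_ge0_mul/mx_ge0E => // i j; rewrite mxE normr_ge0.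
have y_le : mx_le y (invmx P *m w).
  apply: (mx_le_trans yBy); rewrite /B -mulmxA; apply: mx_ler_wpM2l => // i j.
  by rewrite [X in _ <= X]mxE ler_norm.
have Pw : invmx P *m w = X - B *m X.
  have -> : B = 1%:M - invmx P *m A.
    by rewrite (weak_regular_splitting_mulVmx spl) opprB addrC subrK.
  by rewrite mulmxBl mul1mx opprB addrC subrK /X mulmxA -(mulmxA (invmx P)) mulmxV ?mulmx1.
apply: (mx_ge0_bounded_multiples_eq0 y0 (X := X)) => k.
apply: (mx_le_trans (B := X - B ^+ k *m X)); last exact/mx_ler_subl/mx_ge0_mul/X0/mx_ge0X.
elim: k => [|k IH]; first by rewrite scale0r expr0 mul1mx subrr; exact: mx_le_refl.
have -> : X - B ^+ k.+1 *m X = (X - B *m X) + B *m (X - B ^+ k *m X).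
  by rewrite mulmxBr exprS -mulmxE !mulmxA addrA subrK.
rewrite -natr1 scalerDl scale1r addrC -Pw; apply: mx_lerD; first exact: y_le.
apply: (mx_le_trans (B := B *m (k%:R *: y))); last exact: mx_ler_wpM2l.
by rewrite -scalemxAr; apply: mx_ler_wpZ2l.
Qed.

End WeakRegularSplitting.

Section Companion.
Variable R : realType.

Definition companion_mx n (T U : 'M[R]_n) : 'M[R]_(n + n) := block_mx T U 1%:M 0.

Lemma companion_eigenvector n (T U : 'M[R]_n) z :
  mx_ge0 T -> mx_ge0 U -> eigenvalue (cmx (companion_mx T U)) z ->
  exists2 y : 'cV[R]_n, mx_ge0 y /\ y != 0 &
    mx_le (normc z ^+ 2 *: y) ((normc z *: T + U) *m y).
Proof.
move=> /mx_ge0E T0 /mx_ge0E U0 /eigenvalue_col [v v_neq0].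
rewrite -[v]vsubmxK cmxE map_block_mx map_mx1 map_mx0 mul_block_col scale_col_mx.
rewrite mul1mx mul0mx addr0 => /eq_col_mx [top v1E].
set v1 := usubmx v in v_neq0 top v1E; set v2 := dsubmx v in v_neq0 top v1E.
exists (map_mx normc v2).
  split; first by apply/mx_ge0E => i j; rewrite mxE normc_ge0.
  apply: contraNneq v_neq0 => /matrixP v2_0; rewrite -[v]vsubmxK -/v1 -/v2 v1E.
  suff -> : v2 = 0 by rewrite scaler0 col_mx0.
  by apply/matrixP => i j; move: (v2_0 i j); rewrite !mxE => /Normc.eq0_normc.
move=> i j; rewrite [j]ord1 !mxE.
have := congr1 (fun w : 'cV_n => normc (w i 0)) top; rewrite v1E !mxE.
rewrite !Normc.normcM mulrA -expr2 => <-; rewrite -big_split /=.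
apply: le_trans (normc_sum_le _ _) _; apply: ler_sum => k _; rewrite !mxE.
apply: le_trans (le_normcD _ _) _; rewrite !Normc.normcM !normc_real.
by rewrite !ger0_norm // mulrDl mulrA [_ * normc z]mulrC.
Qed.

Lemma companion_spectral_radius_lt1 n (A P N T U : 'M[R]_n) :
  monotone_mx A -> weak_regular_splitting A P N -> invmx P *m N = T + U ->
  mx_ge0 T -> mx_ge0 U -> spectral_radius (companion_mx T U) < 1.
Proof.
move=> Amon spl BE T0 U0; apply: spectral_radius_lt => // z Wz.
rewrite ltNge; apply/negP => r_ge1; set r := normc z in r_ge1.
have r_ge0 : 0 <= r := le_trans ler01 r_ge1.
have r_le_r2 : r <= r ^+ 2 by rewrite expr2 ler_peMl.
have [y [y0 y_neq0] y_le] := companion_eigenvector T0 U0 Wz.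
apply/negP: y_neq0; rewrite negbK; apply/eqP.
apply: (weak_regular_subinvariant_eq0 Amon spl y0); rewrite BE.
have TU_le : mx_le ((r *: T + U) *m y) (r ^+ 2 *: ((T + U) *m y)).
  rewrite scalemxAl; apply: mx_ler_wpM2r => // i j.
  move/mx_ge0E: T0 => /(_ i j) T0; move/mx_ge0E: U0 => /(_ i j) U0.
  rewrite !mxE mulrDr lerD ?ler_wpM2r ?ler_peMl //; exact: le_trans r_ge1 r_le_r2.
have r2_gt0 : 0 < r ^+ 2 by rewrite exprn_gt0 // (lt_le_trans ltr01).
move=> i j; have := mx_le_trans y_le TU_le i j.
by rewrite mxE [X in _ <= X]mxE ler_pM2l.
Qed.

(* For an eigenvalue of modulus [r < 1] with [y] as in companion_eigenvector,
   the vector [(r y; y)] is [r]-subinvariant for [companion_mx T2 U2]. *)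
Lemma companion_spectral_radius_le n (T1 U1 T2 U2 : 'M[R]_n) :
  mx_ge0 T1 -> mx_ge0 U1 -> mx_ge0 T2 -> mx_ge0 U2 ->
  mx_le T2 T1 -> mx_le (T1 + U1) (T2 + U2) ->
  spectral_radius (companion_mx T1 U1) < 1 ->
  spectral_radius (companion_mx T1 U1) <= spectral_radius (companion_mx T2 U2).
Proof.
move=> T1_0 U1_0 T2_0 U2_0 T21 TU12 rho1_lt1.
apply: spectral_radius_le => [|z W1z]; first exact: spectral_radius_ge0.
set r := normc z; have r_ge0 : 0 <= r := normc_ge0 z.
have r_lt1 : r < 1 := le_lt_trans (eigenvalue_le_spectral_radius W1z) rho1_lt1.
have [y [y0 y_neq0] y_le] := companion_eigenvector T1_0 U1_0 W1z.
have rTU : mx_le (r *: T1 + U1) (r *: T2 + U2).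
  move=> i j; have := T21 i j; have := TU12 i j; rewrite !mxE; nra.
apply: (collatz_wielandt (u := col_mx (r *: y) y)).
- by apply: block_mx_ge0 => //; exact: mx_ge0_1.
- by rewrite /mx_ge0 -col_mx0; apply: col_mx_le => //; exact: mx_ge0Z.
- by rewrite col_mx_eq0 negb_and y_neq0 orbT.
rewrite /companion_mx mul_block_col scale_col_mx mul1mx mul0mx addr0.
apply: col_mx_le; last exact: mx_le_refl.
rewrite scalerA -expr2 -scalemxAr scalemxAl -mulmxDl.
exact: mx_le_trans y_le (mx_ler_wpM2r y0 rTU).
Qed.

End Companion.

Section DoubleSplittings.
Variable R : realType.
Variables (n : nat) (A P1 R1 S1 P2 R2 S2 : 'M[R]_n).

Definition W_T := invmx P2 *m R2 - invmx P2 *m S2 *m invmx P1 *m R1.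
Definition W_U := invmx P2 *m S2 *m invmx P1 *m S1.
Definition induced_N := R2 - S2 *m invmx P1 *m R1 + S2 *m invmx P1 *m S1.

Lemma W_mxE : W_mx P1 R1 S1 P2 R2 S2 = companion_mx W_T W_U.
Proof. by []. Qed.

Lemma W_TE : invmx P2 *m (R2 - S2 *m invmx P1 *m R1) = W_T.
Proof. by rewrite mulmxBr !mulmxA. Qed.

Lemma induced_NE : invmx P2 *m induced_N = W_T + W_U.
Proof. by rewrite mulmxDr W_TE !mulmxA. Qed.

Hypotheses (spl1 : dwr_splitting A P1 R1 S1) (spl2 : dwr_splitting A P2 R2 S2).

Lemma W_T_ge0 : mx_ge0 W_T.
Proof.
case: spl1 => _ _ _ P1R1 _; case: spl2 => _ _ _ P2R2 P2S2.
apply/mx_subr_ge0/(mx_le_trans (B := 0)) => //.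
by rewrite -mulmxA; exact: mx_le0_ge0_mul.
Qed.

Lemma W_U_ge0 : mx_ge0 W_U.
Proof.
case: spl1 => _ _ _ _ P1S1; case: spl2 => _ _ _ _ P2S2.
by rewrite /W_U -mulmxA; exact: mx_le0_mul.
Qed.

Lemma induced_weak_regular_splitting :
  weak_regular_splitting ((1%:M - S2 *m invmx P1) *m A) P2 induced_N.
Proof.
case: spl1 => A1E P1u _ _ _; case: spl2 => A2E P2u P2i0 _ _.
split=> //; last by rewrite induced_NE; apply: mx_ge0_add W_T_ge0 W_U_ge0.
have CAE : S2 *m invmx P1 *m A = S2 - S2 *m invmx P1 *m R1 + S2 *m invmx P1 *m S1.
  by rewrite A1E mulmxDr mulmxBr -(mulmxA _ _ P1) mulVmx // mulmx1.
rewrite mulmxBl mul1mx CAE {1}A2E /induced_N.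
by apply/matrixP => i j; rewrite !mxE; ring.
Qed.

End DoubleSplittings.

Unset Implicit Arguments.

Theorem corollary3p14 (R : realType) (n : nat)
  (A P1 R1 S1 P2 R2 S2 P3 R3 S3 P4 R4 S4 : 'M[R]_n) :
  monotone_mx A ->
  dwr_splitting A P1 R1 S1 -> dwr_splitting A P2 R2 S2 ->
  dwr_splitting A P3 R3 S3 -> dwr_splitting A P4 R4 S4 ->
  ~ spectrum (S2 *m invmx P1) 1 ->
  ~ spectrum (S4 *m invmx P3) 1 ->
  let Ahat1 := (1%:M - S2 *m invmx P1) *m A in
  let Phat1 := P2 in
  let Rhat1 := R2 - S2 *m invmx P1 *m R1 in
  let Ahat2 := (1%:M - S4 *m invmx P3) *m A in
  let Phat2 := P4 in
  let Rhat2 := R4 - S4 *m invmx P3 *m R3 in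
  monotone_mx Ahat1 -> monotone_mx Ahat2 ->
  mx_le (invmx Phat2 *m Ahat2) (invmx Phat1 *m Ahat1) ->
  mx_le (invmx Phat2 *m Rhat2) (invmx Phat1 *m Rhat1) ->
  spectral_radius (W_mx P1 R1 S1 P2 R2 S2) <= spectral_radius (W_mx P3 R3 S3 P4 R4 S4)
  /\ spectral_radius (W_mx P3 R3 S3 P4 R4 S4) < 1.
Proof.
move=> _ spl1 spl2 spl3 spl4 _ _ Ahat1 Phat1 Rhat1 Ahat2 Phat2 Rhat2 mon1 mon2 leA leR.
have hat1 := induced_weak_regular_splitting spl1 spl2.
have hat2 := induced_weak_regular_splitting spl3 spl4.
have [T1_0 U1_0] := (W_T_ge0 spl1 spl2, W_U_ge0 spl1 spl2).
have [T2_0 U2_0] := (W_T_ge0 spl3 spl4, W_U_ge0 spl3 spl4).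
have rho1_lt1 := companion_spectral_radius_lt1 mon1 hat1 (induced_NE _ _ _ _ _ _) T1_0 U1_0.
have rho2_lt1 := companion_spectral_radius_lt1 mon2 hat2 (induced_NE _ _ _ _ _ _) T2_0 U2_0.
rewrite !W_mxE; split; last exact: rho2_lt1.
apply: companion_spectral_radius_le => //.
  by move: leR; rewrite /Phat1 /Phat2 /Rhat1 /Rhat2 !W_TE.
move: leA; rewrite /Ahat1 /Ahat2 /Phat1 /Phat2.
rewrite (weak_regular_splitting_mulVmx hat1) (weak_regular_splitting_mulVmx hat2).
by rewrite !induced_NE; exact: mx_lerB2l.
Qed.
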